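(* Let $\Omega=\{P_1,\dots,P_n\}\subseteq\mathbb{F}[x;\sigma,\delta]$ be a set of $n$ distinct skew polynomials of degree at least $1$ with $I(\Omega)\ne\{0\}$, and let $N=\deg(F_\Omega)$. For $F\in\mathbb{F}[x;\sigma,\delta]$ and a non-zero $P$, let $F(P)$ denote the remainder of the right Euclidean division of $F$ by $P$ (so $\deg F(P)<\deg P$), viewed as an element of the left module $\mathbb{F}[x;\sigma,\delta]/(P)$, where $(P)$ is the left ideal generated by $P$. The following are equivalent: (1) $\Omega$ is P-independent; (2) the left $\mathbb{F}$-linear map $\phi:\mathbb{F}[x;\sigma,\delta]_N\to\prod_{i=1}^n\mathbb{F}[x;\sigma,\delta]/(P_i)$, $\phi(F)=(F(P_i))_{i=1}^n$, is an isomorphism of left vector spaces, where $\mathbb{F}[x;\sigma,\delta]_N=\{F:\deg F<N\}$; (3) the left $\mathbb{F}$-linear map $\psi:\mathbb{F}[x;\sigma,\delta]\to\prod_{i=1}^n\mathbb{F}[x;\sigma,\delta]/(P_i)$, $\psi(F)=(F(P_i))_{i=1}^n$, is surjective.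
   Context: Let $\mathbb{F}$ be a division ring, $\sigma$ a ring endomorphism of $\mathbb{F}$ and $\delta$ a $\sigma$-derivation. $\mathbb{F}[x;\sigma,\delta]$ is the skew polynomial ring (left $\mathbb{F}$-vector space with basis $\{x^i\}$, $xa=\sigma(a)x+\delta(a)$), a domain with additive degree and right Euclidean division. For a set $\Omega$ of skew polynomials, $I(\Omega)$ is the left ideal of all $F$ right-divisible by every element of $\Omega$, and $F_\Omega$ is its monic generator of minimal degree (or $0$ if $I(\Omega)=\{0\}$). $\Omega$ is P-independent if it is finite, $I(\Omega)\ne\{0\}$ and $\deg F_\Omega=\sum_{P\in\Omega}\deg P$. *)

From HB Require Import structures.
From mathcomp Require Import all_boot all_order all_algebra.
Set Implicit Arguments. Unset Strict Implicit. Unset Printing Implicit Defensive.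
Import GRing.Theory.
Local Open Scope ring_scope.

Definition is_division_ring (F : unitRingType) : Prop :=
  forall a : F, a != 0 -> a \is a GRing.unit.

(* delta is a sigma-derivation: additive and delta(ab) = sigma(a) delta(b) + delta(a) b,
   which is the rule compatible with x a = sigma(a) x + delta(a). *)
Definition is_sigma_derivation (F : unitRingType) (sigma : F -> F) (delta : F -> F) : Prop :=
  (forall a b, delta (a + b) = delta a + delta b) /\
  (forall a b, delta (a * b) = sigma a * delta b + delta a * b).

(* Skew polynomials are represented by their coefficient sequence (left
   coefficients, basis x^i), i.e. as elements of {poly F} with the
   additive structure and left F-scaling of {poly F}; only the
   multiplication is replaced by the skew multiplication below. *)
Section Skew.
Variables (F : unitRingType) (sigma : F -> F) (delta : F -> F).

(* left multiplication by x : x * (sum b_j x^j) = sum (sigma b_j x^(j+1) + delta b_j x^j) *)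
Definition skxmul (q : {poly F}) : {poly F} :=
  'X * map_poly sigma q + map_poly delta q.

Definition skmul (p q : {poly F}) : {poly F} :=
  \sum_(i < size p) p`_i *: iter i skxmul q.

(* right Euclidean division: remainder of F by P (long division, P <> 0).
   Leading term of (c x^k) * P is c * sigma^k(lead P) x^(k + deg P). *)
Fixpoint skrem_rec (k : nat) (G P : {poly F}) : {poly F} :=
  match k with
  | 0 => G
  | k'.+1 =>
      if (size G < size P)%N then G
      else skrem_rec k'
             (G - skmul ((lead_coef G * (iter (size G - size P) sigma (lead_coef P))^-1)
                           *: 'X^(size G - size P)) P) P
  end.

Definition skrem (G P : {poly F}) : {poly F} := skrem_rec (size G) G P.

Definition skrdvd (P G : {poly F}) : Prop := exists Q, G = skmul Q P.

Definition in_I (n : nat) (Ps : 'I_n -> {poly F}) (G : {poly F}) : Prop :=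
  forall i, skrdvd (Ps i) G.

Definition is_FOmega (n : nat) (Ps : 'I_n -> {poly F}) (G : {poly F}) : Prop :=
  [/\ G \is monic, in_I Ps G &
      forall H, H != 0 -> in_I Ps H -> (size G <= size H)%N].

Definition P_independent (n : nat) (Ps : 'I_n -> {poly F}) : Prop :=
  (exists2 H, H != 0 & in_I Ps H) /\
  exists2 G, is_FOmega Ps G & (size G).-1 = (\sum_(i < n) (size (Ps i)).-1)%N.

End Skew.

From HB Require Import structures.
From mathcomp Require Import all_boot all_order all_algebra.
From Stdlib Require Import Classical.
Set Implicit Arguments. Unset Strict Implicit. Unset Printing Implicit Defensive.
Import GRing.Theory.
Local Open Scope ring_scope.

(* Let d_i = deg P_i, S = sum_i d_i, N = deg F_Omega, and
   phi(A) = (A mod P_i)_i, where A mod P is the remainder of right division.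
   The proof is linear algebra over the division ring F:
   - right division by P != 0 with remainder exists and is unique (the skew
     product adds degrees), so A |-> A mod P is left F-linear and vanishes
     exactly on the left multiples of P;
   - a nonzero A with all remainders 0 lies in I(Omega), hence has degree
     >= N: phi is injective in degree < N, which gives N <= S;
   - if phi is onto from degree < N then S <= N; if N = S, a free family of
     N vectors in an N-dimensional space spans it, so phi is onto;
   - P-independence means N = S, since F_Omega is unique up to degree;
   - if psi is onto, so is phi: A mod F_Omega has the same remainders as A,
     because left multiples of F_Omega lie in I(Omega) (associativity). *)

Lemma size_sub_top (R : nzRingType) (A B : {poly R}) :
  (size B <= size A)%N -> (0 < size A)%N ->
  B`_(size A).-1 = A`_(size A).-1 -> (size (A - B)%R < size A)%N.
Proof.
move=> hBA hA htop; rewrite -(ltn_predK hA) ltnS.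
apply/leq_sizeP => j hj; rewrite coefB.
have [->|ne] := eqVneq j (size A).-1; first by rewrite htop subrr.
have hj' : (size A <= j)%N by rewrite -(ltn_predK hA) ltn_neqAle eq_sym ne hj.
by rewrite !nth_default ?subrr //; apply: leq_trans hj'.
Qed.

Section SkewPolynomials.
Variables (F : unitRingType) (sigma : {rmorphism F -> F}) (delta : F -> F).
Hypothesis divF : is_division_ring F.
Hypothesis sderiv : is_sigma_derivation sigma delta.

Local Notation xmul := (skxmul sigma delta).
Local Notation xpow i q := (iter i xmul q).
Local Notation "p ** q" := (skmul sigma delta p q) (at level 40, left associativity).
Local Notation skr := (skrem sigma delta).

Lemma delta0 : delta 0 = 0.
Proof. by apply: (@addrI _ (delta 0)); rewrite -sderiv.1 !addr0. Qed.

(* sigma is injective, being a ring morphism defined on a division ring *)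
Lemma sigma_neq0 a : a != 0 -> sigma a != 0.
Proof.
by move=> a0; apply: contraTneq (rmorph_unit sigma (divF a0)) => ->; rewrite unitr0.
Qed.

Lemma coef_xmul (q : {poly F}) k :
  (xmul q)`_k = (if k == 0%N then 0 else sigma q`_k.-1) + delta q`_k.
Proof.
rewrite /skxmul coefD coefXM (coef_map_id0 _ _ delta0).
by case: (k == 0%N); rewrite ?coef_map.
Qed.

Lemma xmulD (p q : {poly F}) : xmul (p + q) = xmul p + xmul q.
Proof.
apply/polyP => k; rewrite [RHS]coefD !coef_xmul !coefD sderiv.1.
by case: (k == 0%N); rewrite ?add0r ?rmorphD // addrACA.
Qed.

Lemma xmul0 : xmul 0 = 0.
Proof. by apply/polyP => k; rewrite coef_xmul !coef0 rmorph0 delta0 addr0; case: ifP. Qed.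

Lemma xmulZ a (q : {poly F}) : xmul (a *: q) = sigma a *: xmul q + delta a *: q.
Proof.
apply/polyP => k; rewrite [RHS]coefD !coefZ !coef_xmul !coefZ sderiv.2 mulrDr addrA.
by case: (k == 0%N); rewrite ?mulr0 ?add0r ?rmorphM.
Qed.

Lemma size_xmul_le (q : {poly F}) : (size (xmul q) <= (size q).+1)%N.
Proof.
apply/leq_sizeP => j hj; rewrite coef_xmul !nth_default ?delta0 ?addr0 ?rmorph0 //.
- by case: ifP.
- exact: ltnW.
- by case: j hj.
Qed.

Lemma size_lead_xmul (q : {poly F}) : q != 0 ->
  size (xmul q) = (size q).+1 /\ lead_coef (xmul q) = sigma (lead_coef q).
Proof.
move=> q0.
have lead_xq : (xmul q)`_(size q) = sigma (lead_coef q).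
  rewrite coef_xmul lead_coefE (nth_default _ (leqnn (size q))) delta0 addr0.
  by rewrite -[_ == _]negbK -lt0n size_poly_gt0 q0.
have size_xq : size (xmul q) = (size q).+1.
  apply/eqP; rewrite eqn_leq size_xmul_le ltnNge; apply/negP => /leq_sizeP/(_ _ (leqnn _)).
  by rewrite lead_xq => /eqP; apply/negP/sigma_neq0; rewrite lead_coef_eq0.
by rewrite lead_coefE size_xq.
Qed.

Lemma size_lead_xpow i (q : {poly F}) : q != 0 ->
  size (xpow i q) = (size q + i)%N /\ lead_coef (xpow i q) = iter i sigma (lead_coef q).
Proof.
move=> q0; elim: i => [|i [IHs IHl]] /=; first by rewrite addn0.
have xq0 : xpow i q != 0 by rewrite -size_poly_gt0 IHs addn_gt0 size_poly_gt0 q0.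
by have [-> ->] := size_lead_xmul xq0; rewrite IHs IHl addnS.
Qed.

Lemma skmulE (p q : {poly F}) m : (size p <= m)%N -> p ** q = \sum_(i < m) p`_i *: xpow i q.
Proof.
move=> h; rewrite /skmul (big_ord_widen m (fun i => p`_i *: xpow i q) h) big_mkcond.
apply: eq_bigr => i _; case: ltnP => // h'.
by rewrite nth_default // scale0r.
Qed.

Lemma skmul0l (q : {poly F}) : 0 ** q = 0.
Proof. by rewrite /skmul size_poly0 big_ord0. Qed.

Lemma skmulDl (p p' q : {poly F}) : (p + p') ** q = p ** q + p' ** q.
Proof.
pose m := maxn (size p) (size p').
rewrite !(@skmulE _ _ m) ?leq_maxl ?leq_maxr ?size_polyD //.
by rewrite -big_split; apply: eq_bigr => i _; rewrite coefD scalerDl.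
Qed.

Lemma skmulZl a (p q : {poly F}) : (a *: p) ** q = a *: (p ** q).
Proof.
rewrite !(@skmulE _ _ (size p)) ?size_scale_leq // scaler_sumr.
by apply: eq_bigr => i _; rewrite coefZ scalerA.
Qed.

Lemma skmulBl (p p' q : {poly F}) : (p - p') ** q = p ** q - p' ** q.
Proof. by rewrite skmulDl -scaleN1r skmulZl scaleN1r. Qed.

Lemma skmulXn c k (q : {poly F}) : (c *: 'X^k) ** q = c *: xpow k q.
Proof.
rewrite skmulZl (@skmulE _ _ k.+1) ?size_polyXn // big_ord_recr /= big1.
  by rewrite coefXn eqxx scale1r add0r.
by move=> i _; rewrite coefXn ltn_eqF ?scale0r.
Qed.

Lemma size_skmul (p q : {poly F}) : p != 0 -> q != 0 -> size (p ** q) = (size p + size q).-1.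
Proof.
move=> p0 q0; rewrite /skmul.
have := polySpred p0; set s := (size p).-1 => ->; rewrite big_ord_recr /=.
have [xs xl] := size_lead_xpow s q0.
have size_top : size (p`_s *: xpow s q) = (size q + s)%N.
  rewrite lreg_size ?xs //; apply/mulrI/divF.
  by rewrite -lead_coef_eq0 lead_coefE in p0.
rewrite addrC size_polyDl size_top; first by rewrite addnC.
apply: (big_ind (fun x : {poly F} => (size x < size q + s)%N)).
- by rewrite size_poly0 addn_gt0 size_poly_gt0 q0.
- by move=> x y hx hy; apply: leq_ltn_trans (size_polyD _ _) _; rewrite gtn_max hx hy.
move=> i _; apply: leq_ltn_trans (size_scale_leq _ _) _.
by rewrite (size_lead_xpow i q0).1 ltn_add2l ltn_ord.
Qed.

Lemma xmul_skmul (q r : {poly F}) : xmul (q ** r) = xmul q ** r.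
Proof.
rewrite (@skmulE (xmul q) r (size q).+1) ?size_xmul_le // /skmul.
rewrite (big_morph xmul xmulD xmul0); under eq_bigr do rewrite xmulZ.
under [in RHS]eq_bigr do rewrite coef_xmul scalerDl.
rewrite !big_split /= big_ord_recl big_ord_recr /= scale0r add0r.
by rewrite (nth_default _ (leqnn _)) delta0 scale0r addr0.
Qed.

Lemma skmulA (p q r : {poly F}) : p ** (q ** r) = p ** q ** r.
Proof.
have xpow_skmul k : xpow k (q ** r) = xpow k q ** r.
  by elim: k => //= k ->; rewrite xmul_skmul.
have -> : p ** q ** r = \sum_(i < size p) (p`_i *: xpow i q) ** r.
  by rewrite (big_morph (skmul sigma delta ^~ r) (fun p p' => skmulDl p p' r) (skmul0l r)).
by apply: eq_bigr => i _; rewrite xpow_skmul skmulZl.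
Qed.

Lemma long_division_step (A P : {poly F}) (m := (size A - size P)%N)
    (c := lead_coef A * (iter m sigma (lead_coef P))^-1) :
  P != 0 -> (size P <= size A)%N -> (size (A - c *: xpow m P)%R < size A)%N.
Proof.
move=> P0 hPA; have [size_xP lead_xP] := size_lead_xpow m P0.
have size_xP' : size (xpow m P) = size A by rewrite size_xP subnKC.
have t_unit : iter m sigma (lead_coef P) \is a GRing.unit.
  apply: divF; elim: (m) => [|k IH] /=; first by rewrite lead_coef_eq0.
  exact: sigma_neq0.
apply: size_sub_top.
- by rewrite (leq_trans (size_scale_leq _ _)) ?size_xP'.
- by apply: leq_trans hPA; rewrite size_poly_gt0.
by rewrite coefZ -{1}size_xP' -!lead_coefE lead_xP mulrVK.
Qed.

Lemma skrem_recP (P : {poly F}) : P != 0 -> forall k (A : {poly F}), (size A <= k)%N ->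
  exists Q, A = Q ** P + skrem_rec sigma delta k A P /\
            (size (skrem_rec sigma delta k A P) < size P)%N.
Proof.
move=> P0; elim=> [|k IH] A hA /=.
  exists 0; rewrite skmul0l add0r; split => //.
  by move: hA; rewrite leqn0 => /eqP ->; rewrite size_poly_gt0.
case: ltnP => hPA; first by exists 0; rewrite skmul0l add0r.
have := long_division_step P0 hPA.
set c := _ * _^-1; set m := (size A - size P)%N; rewrite -skmulXn => step.
have [Q [HQ HR]] := IH _ (leq_trans step hA).
by exists (Q + c *: 'X^m); rewrite skmulDl addrAC -HQ subrK.
Qed.

Lemma skremP (A P : {poly F}) : P != 0 ->
  exists Q, A = Q ** P + skr A P /\ (size (skr A P) < size P)%N.
Proof. by move=> P0; apply: skrem_recP. Qed.

Lemma size_skrem (A P : {poly F}) : P != 0 -> (size (skr A P) < size P)%N.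
Proof. by move=> /(skremP A)[Q []]. Qed.

(* the remainder is unique, since a nonzero multiple of P has size at least size P *)
Lemma skrem_uniq (A P Q R : {poly F}) : P != 0 -> (size R < size P)%N ->
  A = Q ** P + R -> skr A P = R.
Proof.
move=> P0 hR hA; have [Q' [HQ' HR']] := skremP A P0.
have e : (Q - Q') ** P = skr A P - R.
  have e0 : Q ** P + R = Q' ** P + skr A P by rewrite -hA -HQ'.
  by apply/eqP; rewrite skmulBl subr_eq addrAC eq_sym subr_eq e0 addrC.
have [Q_eq|nQ] := eqVneq (Q - Q') 0.
  by move: e; rewrite Q_eq skmul0l => /eqP; rewrite eq_sym subr_eq0 => /eqP.
have : (size (skr A P - R)%R < size P)%N.
  by apply: leq_ltn_trans (size_polyD _ _) _; rewrite size_polyN gtn_max HR' hR.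
rewrite -e size_skmul // -subn1 ltn_subLR; last by rewrite addn_gt0 size_poly_gt0 nQ.
by rewrite ltn_add2r ltnNge size_poly_gt0 nQ.
Qed.

Lemma skrem_linear a (A B P : {poly F}) : P != 0 ->
  skr (a *: A + B) P = a *: skr A P + skr B P.
Proof.
move=> P0; have [QA [HA RA]] := skremP A P0; have [QB [HB RB]] := skremP B P0.
apply: (@skrem_uniq _ _ (a *: QA + QB)) => //.
  apply: leq_ltn_trans (size_polyD _ _) _; rewrite gtn_max RB andbT.
  exact: leq_ltn_trans (size_scale_leq _ _) RA.
by rewrite skmulDl skmulZl {1}HA {1}HB scalerDr addrACA.
Qed.

Lemma skrem0 (P : {poly F}) : P != 0 -> skr 0 P = 0.
Proof. by move=> P0; apply: (@skrem_uniq _ _ 0); rewrite ?skmul0l ?addr0 ?size_poly0 ?size_poly_gt0. Qed.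

Lemma skremD (A B P : {poly F}) : P != 0 -> skr (A + B) P = skr A P + skr B P.
Proof. by move=> P0; have := skrem_linear 1 A B P0; rewrite !scale1r. Qed.

Lemma skremB (A B P : {poly F}) : P != 0 -> skr (A - B) P = skr A P - skr B P.
Proof. by move=> P0; have := skrem_linear (-1) B A P0; rewrite !scaleN1r !(addrC (- _)). Qed.

Lemma skrem_sum (I : Type) (r : seq I) (l : I -> F) (f : I -> {poly F}) P :
  P != 0 -> skr (\sum_(i <- r) l i *: f i) P = \sum_(i <- r) l i *: skr (f i) P.
Proof.
move=> P0; elim: r => [|x r IH]; first by rewrite !big_nil skrem0.
by rewrite !big_cons skrem_linear // IH.
Qed.

Lemma skrem_eq0 (A P : {poly F}) : P != 0 -> skr A P = 0 <-> skrdvd sigma delta P A.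
Proof.
move=> P0; split => [A_rem0|[Q ->]].
  by have [Q [HQ _]] := skremP A P0; exists Q; rewrite {1}HQ A_rem0 addr0.
by apply: (@skrem_uniq _ _ Q); rewrite ?addr0 ?size_poly0 ?size_poly_gt0.
Qed.

End SkewPolynomials.

Lemma sum_option (V : nmodType) (I : finType) (f : option I -> V) :
  \sum_o f o = f None + \sum_i f (Some i).
Proof.
rewrite (bigD1 None) //=; congr (_ + _).
by rewrite (reindex_omap Some id) //=; [apply: eq_bigl => i; rewrite eqxx | case].
Qed.

Section LeftLinearAlgebra.
Variable F : unitRingType.
Hypothesis divF : is_division_ring F.

Definition free_family (I J : finType) (u : I -> J -> F) : Prop :=
  forall l : I -> F, (forall j, \sum_i l i * u i j = 0) -> forall i, l i = 0.

Lemma free_drop_zero_coord a b (u : 'I_a -> 'I_b.+1 -> F) :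
  free_family u -> (forall i, u i ord_max = 0) ->
  free_family (fun i j => u i (lift ord_max j)).
Proof.
move=> free_u u0 l Hl; apply: free_u => j.
case: (unliftP ord_max j) => [j'|] ->; first exact: Hl.
by rewrite big1 // => i _; rewrite u0 mulr0.
Qed.

(* Gaussian elimination: using a pivot u k with nonzero last coordinate c to
   clear the last coordinate of the other vectors keeps the family free *)
Lemma free_pivot a b (u : 'I_a.+1 -> 'I_b.+1 -> F) (k : 'I_a.+1) :
  free_family u -> u k ord_max != 0 ->
  free_family (fun i j => u (lift k i) (lift ord_max j)
                          - u (lift k i) ord_max * (u k ord_max)^-1 * u k (lift ord_max j)).
Proof.
move=> free_u c0 l Hl; set c := u k ord_max in c0 *.
set mu := - (\sum_i l i * u (lift k i) ord_max) * c^-1.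
pose L i := if unlift k i is Some i' then l i' else mu.
have HL j : \sum_i L i * u i j = 0.
  rewrite (bigD1_ord k) //= /L unlift_none; under eq_bigr do rewrite liftK.
  case: (unliftP ord_max j) => [j'|] ->; last by rewrite /mu mulrVK ?addNr //; apply: divF.
  have /= := Hl j'; under eq_bigr do rewrite mulrBr !mulrA.
  by rewrite sumrB -!mulr_suml /mu mulNr !mulNr addrC.
by move=> i; have := free_u L HL (lift k i); rewrite /L liftK.
Qed.

(* Steinitz bound for F^b, by induction on b: eliminate the last coordinate *)
Lemma free_card_ord b : forall a (u : 'I_a -> 'I_b -> F), free_family u -> (a <= b)%N.
Proof.
elim: b => [|b IH] [|a] u free_u //.
  have := free_u (fun _ => 1) (fun j => match j with Ordinal _ h => False_ind _ (notF h) end).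
  by move=> /(_ ord0) /eqP; rewrite oner_eq0.
have [/existsP[k uk0]|/existsPn u0] := boolP [exists i, u i ord_max != 0].
  exact: IH (free_pivot free_u uk0).
apply: leqW; apply: IH (free_drop_zero_coord free_u _) => i.
by apply/eqP; have := u0 i; rewrite negbK.
Qed.

Lemma free_card (I J : finType) (u : I -> J -> F) : free_family u -> (#|I| <= #|J|)%N.
Proof.
move=> free_u; apply: (@free_card_ord _ _ (fun i j => u (enum_val i) (enum_val j))) => l Hl i.
suff l0 x : l (enum_rank x) = 0 by rewrite -(enum_valK i) l0.
move: x; apply: free_u => j; rewrite -[RHS](Hl (enum_rank j)) /=.
rewrite (reindex (@enum_val I predT)) /=; last by exists enum_rank => x _; rewrite ?enum_valK ?enum_rankK.
by apply: eq_bigr => x _; rewrite enum_valK enum_rankK.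
Qed.

(* a free family with #|J| members spans F^J: otherwise adjoining a vector
   outside its span would give a free family that is too large *)
Lemma free_span (I J : finType) (u : I -> J -> F) : free_family u -> #|I| = #|J| ->
  forall w : J -> F, exists l : I -> F, forall j, \sum_i l i * u i j = w j.
Proof.
move=> free_u cardIJ w; apply: NNPP => not_spanned.
pose v (o : option I) j := if o is Some i then u i j else w j.
suff /free_card : free_family v by rewrite card_option cardIJ ltnn.
move=> l Hl; have {}Hl j : l None * w j + \sum_i l (Some i) * u i j = 0.
  by rewrite -[RHS](Hl j) sum_option.
have lw0 : l None = 0.
  have [//|lw_neq0] := eqVneq (l None) 0; case: not_spanned.
  exists (fun i => - (l None)^-1 * l (Some i)) => j.
  under eq_bigr do rewrite -mulrA.
  have e : \sum_i l (Some i) * u i j = - (l None * w j).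
    by apply/eqP; rewrite -addr_eq0 addrC Hl.
  by rewrite -mulr_sumr e mulNr mulrN opprK mulKr //; apply: divF.
have lS0 : forall i, l (Some i) = 0.
  by apply: free_u => j; have := Hl j; rewrite lw0 mul0r add0r.
by case.
Qed.

End LeftLinearAlgebra.

Lemma coef_sumXn (R : nzRingType) m (l : 'I_m -> R) (k : 'I_m) :
  (\sum_(i < m) l i *: 'X^i)`_k = l k.
Proof. by rewrite coef_sumMXn big_pred1_eq. Qed.

Lemma size_sumXn (R : nzRingType) m (l : 'I_m -> R) :
  (size (\sum_(i < m) l i *: 'X^i)%R <= m)%N.
Proof.
rewrite (leq_trans (size_sum _ _ _)) //; apply/bigmax_leqP => i _.
by rewrite (leq_trans (size_scale_leq _ _)) // size_polyXn.
Qed.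

Section PIndependence.
Variables (F : unitRingType) (sigma : {rmorphism F -> F}) (delta : F -> F).
Hypothesis divF : is_division_ring F.
Hypothesis sderiv : is_sigma_derivation sigma delta.
Variables (n : nat) (Ps : 'I_n -> {poly F}) (G : {poly F}).
Hypothesis Ps_size : forall i, (1 < size (Ps i))%N.
Hypothesis FOmega : is_FOmega sigma delta Ps G.

Local Notation "p ** q" := (skmul sigma delta p q) (at level 40, left associativity).
Local Notation skr := (skrem sigma delta).
Local Notation N := (size G).-1.
Local Notation d i := (size (Ps i)).-1.

Lemma Ps_neq0 i : Ps i != 0.
Proof. by rewrite -size_poly_gt0 ltnW. Qed.

Lemma G_neq0 : G != 0.
Proof. by case: FOmega => /monic_neq0. Qed.

Lemma size_rem (A : {poly F}) i : (size (skr A (Ps i)) < size (Ps i))%N.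
Proof. by have := size_skrem divF sderiv A (Ps_neq0 i). Qed.

Lemma skmulG_in_I (Q : {poly F}) : in_I sigma delta Ps (Q ** G).
Proof.
case: FOmega => _ G_in_I _ i; have [Qi ->] := G_in_I i.
by exists (Q ** Qi); rewrite (skmulA sderiv).
Qed.

(* a nonzero element of I(Omega) has degree at least deg F_Omega, so the
   remainder map is injective in degree < N *)
Lemma remainders_eq0 (B : {poly F}) :
  (size B <= N)%N -> (forall i, skr B (Ps i) = 0) -> B = 0.
Proof.
move=> sizeB rem0; apply: contraTeq sizeB => B0; rewrite -ltnNge.
have B_in_I : in_I sigma delta Ps B by move=> i; apply/(skrem_eq0 divF sderiv B (Ps_neq0 i)).
case: FOmega => _ _ /(_ B B0 B_in_I); apply: leq_trans.
by rewrite ltn_predL size_poly_gt0 G_neq0.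
Qed.

Lemma remainders_inj (A B : {poly F}) : (size A <= N)%N -> (size B <= N)%N ->
  (forall i, skr A (Ps i) = skr B (Ps i)) -> A = B.
Proof.
move=> sizeA sizeB sameR; apply/eqP; rewrite -subr_eq0; apply/eqP/remainders_eq0.
  by rewrite (leq_trans (size_polyD _ _)) // size_polyN geq_max sizeA sizeB.
by move=> i; rewrite (skremB divF sderiv _ _ (Ps_neq0 i)) sameR subrr.
Qed.

Lemma remainders_modG (A : {poly F}) i : skr (skr A G) (Ps i) = skr A (Ps i).
Proof.
have [Q [HQ _]] := skremP divF sderiv A G_neq0.
have QG_rem0 : skr (Q ** G) (Ps i) = 0.
  by apply/(skrem_eq0 divF sderiv _ (Ps_neq0 i)); exact: skmulG_in_I.
by rewrite [in RHS]HQ (skremD divF sderiv _ _ (Ps_neq0 i)) QG_rem0 add0r.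
Qed.

(* coordinates on prod_i F[x]/(P_i): the k-th coefficient of the i-th
   component, for k < deg P_i *)
Definition coord_index : finType := {i : 'I_n & 'I_(d i)}.

Lemma card_coord_index : #|coord_index| = (\sum_i d i)%N.
Proof.
rewrite card_tagged sumnE big_map big_enum.
by apply: eq_bigr => i _; rewrite card_ord.
Qed.

Definition rcoord (Rs : 'I_n -> {poly F}) (j : coord_index) : F :=
  (Rs (tag j))`_(tagged j).

Definition rpoly (w : coord_index -> F) (i : 'I_n) : {poly F} :=
  \sum_(k < d i) w (Tagged (fun i => 'I_(d i)) k) *: 'X^k.

Lemma rcoord_rpoly w j : rcoord (rpoly w) j = w j.
Proof. by case: j => i k; rewrite /rcoord /rpoly /= coef_sumXn. Qed.

Lemma size_rpoly w i : (size (rpoly w i) < size (Ps i))%N.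
Proof. by rewrite (leq_ltn_trans (size_sumXn _)) // ltn_predL size_poly_gt0 Ps_neq0. Qed.

Lemma rcoord_inj (Rs Rs' : 'I_n -> {poly F}) :
  (forall i, size (Rs i) < size (Ps i))%N -> (forall i, size (Rs' i) < size (Ps i))%N ->
  (forall j, rcoord Rs j = rcoord Rs' j) -> forall i, Rs i = Rs' i.
Proof.
move=> sizeR sizeR' sameC i; apply/polyP => k.
have [lt_k|le_k] := ltnP k (d i); first exact: (sameC (Tagged _ (Ordinal lt_k))).
have sizeP := ltn_predK (sizeR i).
by rewrite !nth_default // (leq_trans _ le_k) // -ltnS sizeP.
Qed.

Definition phi_coord (A : {poly F}) : coord_index -> F := rcoord (fun i => skr A (Ps i)).

Lemma phi_coord_sum (I : finType) (l : I -> F) (f : I -> {poly F}) j :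
  phi_coord (\sum_k l k *: f k) j = \sum_k l k * phi_coord (f k) j.
Proof.
rewrite /phi_coord /rcoord (skrem_sum divF sderiv _ _ _ (Ps_neq0 _)) coef_sum.
by apply: eq_bigr => k _; rewrite coefZ.
Qed.

Lemma phi_coord0 j : phi_coord 0 j = 0.
Proof. by rewrite /phi_coord /rcoord skrem0 ?coef0 ?Ps_neq0. Qed.

Lemma phi_coordE A Rs : (forall i, skr A (Ps i) = Rs i) -> phi_coord A =1 rcoord Rs.
Proof. by move=> HA j; rewrite /phi_coord /rcoord HA. Qed.

(* the remainder tuples of 1, x, ..., x^(N-1) are independent: a vanishing
   combination is a polynomial of degree < N in the kernel *)
Lemma free_monomial_images : free_family (fun (m : 'I_N) => phi_coord 'X^m).
Proof.
move=> l Hl m; set B := \sum_(m < N) l m *: 'X^m.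
suff B0 : B = 0 by rewrite -(coef_sumXn l m) -/B B0 coef0.
apply: remainders_eq0; first exact: size_sumXn.
apply: (rcoord_inj (Rs' := fun _ => 0)) => [i|i|j].
- exact: size_rem.
- by rewrite size_poly0 size_poly_gt0 Ps_neq0.
- by rewrite -/(phi_coord B j) phi_coord_sum Hl /rcoord coef0.
Qed.

Lemma N_le_S : (N <= \sum_i d i)%N.
Proof.
rewrite -card_coord_index -[X in (X <= _)%N]card_ord.
exact: (free_card divF free_monomial_images).
Qed.

(* if every remainder tuple has a preimage of degree < N, the preimages of
   the coordinate basis vectors are independent in F^N *)
Lemma S_le_N :
  (forall Rs : 'I_n -> {poly F}, (forall i, size (Rs i) < size (Ps i))%N ->
     exists2 A : {poly F}, (size A <= N)%N & forall i, skr A (Ps i) = Rs i) ->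
  (\sum_i d i <= N)%N.
Proof.
move=> onto; pose e j := rpoly (fun j' => (j' == j)%:R).
have [A HA] : exists A : coord_index -> {poly F},
    forall j, (size (A j) <= N)%N /\ forall i, skr (A j) (Ps i) = e j i.
  apply: (@fin_all_exists _ (fun=> {poly F}) (fun j A => (size A <= N)%N /\ forall i, skr A (Ps i) = e j i)).
  by move=> j; have [A ? ?] := onto (e j) (size_rpoly _); exists A.
rewrite -card_coord_index -[X in (_ <= X)%N]card_ord.
apply: (free_card divF (u := fun j (m : 'I_N) => (A j)`_m)) => l Hl j0.
have B0 : \sum_j l j *: A j = 0.
  apply/polyP => k; rewrite coef0 coef_sum.
  have [lt_kN|le_Nk] := ltnP k N.
    by rewrite -[RHS](Hl (Ordinal lt_kN)); apply: eq_bigr => j _; rewrite coefZ.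
  rewrite big1 // => j _; rewrite coefZ nth_default ?mulr0 //.
  exact: leq_trans (HA j).1 le_Nk.
have phiA j : phi_coord (A j) j0 = (j0 == j)%:R.
  by rewrite (phi_coordE (HA j).2) rcoord_rpoly.
have := phi_coord_sum l A j0; rewrite B0 phi_coord0 (bigD1 j0) //= big1 => [|j ne_j].
  by rewrite phiA eqxx mulr1 addr0 => /esym.
by rewrite phiA eq_sym (negbTE ne_j) mulr0.
Qed.

Lemma phi_onto_of_eq : N = (\sum_i d i)%N ->
  forall Rs : 'I_n -> {poly F}, (forall i, size (Rs i) < size (Ps i))%N ->
     exists2 A : {poly F}, (size A <= N)%N & forall i, skr A (Ps i) = Rs i.
Proof.
move=> eqNS Rs sizeR.
have [|l Hl] := free_span divF free_monomial_images _ (rcoord Rs).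
  by rewrite card_ord card_coord_index.
exists (\sum_(m < N) l m *: 'X^m); first exact: size_sumXn.
apply: rcoord_inj => [i|//|j]; first exact: size_rem.
by rewrite -/(phi_coord _ j) phi_coord_sum Hl.
Qed.

(* if psi is onto then so is phi: reducing a preimage modulo F_Omega keeps
   its remainders and brings its degree below N *)
Lemma phi_onto_of_psi_onto :
  (forall Rs : 'I_n -> {poly F}, (forall i, size (Rs i) < size (Ps i))%N ->
     exists A : {poly F}, forall i, skr A (Ps i) = Rs i) ->
  forall Rs : 'I_n -> {poly F}, (forall i, size (Rs i) < size (Ps i))%N ->
     exists2 A : {poly F}, (size A <= N)%N & forall i, skr A (Ps i) = Rs i.
Proof.
move=> onto Rs /onto[A HA]; exists (skr A G) => [|i]; last by rewrite remainders_modG.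
have size_rem := size_skrem divF sderiv A G_neq0.
by rewrite -ltnS (ltn_predK size_rem).
Qed.

(* F_Omega is unique up to degree, so P-independence says exactly N = S *)
Lemma P_independent_iff : P_independent sigma delta Ps <-> N = (\sum_i d i)%N.
Proof.
split => [[_ [G' FOmega' degG']]|eqNS].
  rewrite -degG'; congr (_.-1); case: FOmega FOmega' => mG IG minG [mG' IG' minG'].
  by apply/eqP; rewrite eqn_leq minG ?minG' ?monic_neq0.
split; last by exists G.
by exists G; [exact: G_neq0 | case: FOmega].
Qed.

End PIndependence.

Unset Implicit Arguments.
Set Strict Implicit.

Theorem mainTheorem3 (F : unitRingType) (sigma : {rmorphism F -> F}) (delta : F -> F)
  (n : nat) (Ps : 'I_n -> {poly F}) (G : {poly F}) :
  is_division_ring F ->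
  is_sigma_derivation sigma delta ->
  injective Ps ->
  (forall i, 1 < size (Ps i))%N ->
  (exists2 H, H != 0 & in_I sigma delta Ps H) ->
  is_FOmega sigma delta Ps G ->
  let N := (size G).-1 in
  let skr := skrem sigma delta in
  (P_independent sigma delta Ps <->
   [/\ (forall (a : F) (A B : {poly F}), (size A <= N)%N -> (size B <= N)%N ->
          forall i, skr (a *: A + B) (Ps i) = a *: skr A (Ps i) + skr B (Ps i)),
       (forall A B : {poly F}, (size A <= N)%N -> (size B <= N)%N ->
          (forall i, skr A (Ps i) = skr B (Ps i)) -> A = B) &
       (forall Rs : 'I_n -> {poly F}, (forall i, size (Rs i) < size (Ps i))%N ->
          exists2 A : {poly F}, (size A <= N)%N & forall i, skr A (Ps i) = Rs i)])
  /\
  (P_independent sigma delta Ps <->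
   (forall Rs : 'I_n -> {poly F}, (forall i, size (Rs i) < size (Ps i))%N ->
      exists A : {poly F}, forall i, skr A (Ps i) = Rs i)).
Proof.
move=> divF sderiv _ Ps_size _ FOmega N skr.
have Pind_iff := P_independent_iff FOmega.
have N_le_S := N_le_S divF sderiv Ps_size FOmega.
split; split.
- move/Pind_iff => eqNS; split.
  + by move=> a A B _ _ i; apply: (skrem_linear divF sderiv _ _ _ (Ps_neq0 Ps_size i)).
  + exact: (remainders_inj divF sderiv Ps_size FOmega).
  + exact: (phi_onto_of_eq divF sderiv Ps_size FOmega eqNS).
- case=> _ _ onto; apply/Pind_iff/eqP.
  by rewrite eqn_leq N_le_S (S_le_N divF sderiv Ps_size onto).
- by move/Pind_iff/(phi_onto_of_eq divF sderiv Ps_size FOmega) => onto Rs /onto[A _ HA]; exists A.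
move=> /(phi_onto_of_psi_onto divF sderiv Ps_size FOmega) onto.
by apply/Pind_iff/eqP; rewrite eqn_leq N_le_S (S_le_N divF sderiv Ps_size onto).
Qed.
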